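(* Let $a,b,c\ge 0$, $r\ge 0$, and for $t\in[0,1]$ let $$r_{h.d.}(t)=\min\big\{t\max(\alpha,\gamma)+(1-t)\gamma,\ t\gamma+(1-t)\max(\beta,\gamma)\big\}.$$ The DMT achieved by static QMF on the half-duplex $(a,b,c)$-relay channel, $$d_{QMF}(r)=\min\Big\{a+b+c-\alpha-\beta-\gamma \;:\; r_{h.d.}(1/2)\le r,\ 0\le\alpha\le a,\ 0\le\beta\le b,\ 0\le\gamma\le c\Big\},$$ is given by $$d_{QMF}(r)=\begin{cases}\big(\min(a,b)-r\big)^{+}+(c-r)^{+} & \text{if } c>\min(a,b),\\ \big(\min(a,b)+c-2r\big)^{+} & \text{if } c\le\min(a,b).\end{cases}$$
   Context: The $(a,b,c)$-relay channel: source $S$, half-duplex relay $R$ (cannot transmit and receive simultaneously), destination $D$; the source signal is broadcast to $R$ and $D$, and source and relay signals superpose at $D$. Channel gains $h_{sr},h_{rd},h_{sd}$ are i.i.d. $\mathcal{CN}(0,1)$, quasi-static, known only at receivers; average SNRs of S-R, R-D, S-D are $\rho^a,\rho^b,\rho^c$. The exponential orders are $\alpha=\lim_{\rho\to\infty}\frac{\log(1+|h_{sr}|^2\rho^a)}{\log\rho}$ and similarly $\beta,\gamma$ for $|h_{rd}|^2\rho^b$, $|h_{sd}|^2\rho^c$. Multiplexing gain $r=\lim R/\log\rho$, diversity $d=-\lim \log P_e/\log\rho$, $x^+=\max(x,0)$. Static QMF: the relay listens for half of the total duration, quantizes its received signal at the noise level, maps it to a random codeword and transmits it in the second half; the schedule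 is independent of channel realizations. With a relay listening fraction $t$, the QMF rate is within a constant of the half-duplex cut-set expression, whose high-SNR exponent is $r_{h.d.}(t)$, so that the scheme is in outage iff $r_{h.d.}(1/2)\le r$; this yields the optimization formula in the claim. *)

From Stdlib Require Import Reals.
Open Scope R_scope.

Definition pos_part (x : R) : R := Rmax x 0.

(* high-SNR exponent of the half-duplex cut-set bound with listening fraction t *)
Definition r_hd (t alpha beta gamma : R) : R :=
  Rmin (t * Rmax alpha gamma + (1 - t) * gamma)
       (t * gamma + (1 - t) * Rmax beta gamma).

Definition qmf_outage (a b c r alpha beta gamma : R) : Prop :=
  r_hd (1/2) alpha beta gamma <= r /\
  0 <= alpha <= a /\ 0 <= beta <= b /\ 0 <= gamma <= c.

Definition is_min (P : R -> Prop) (m : R) : Prop :=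
  P m /\ forall x, P x -> m <= x.

Definition dqmf_set (a b c r : R) : R -> Prop :=
  fun v => exists alpha beta gamma,
    qmf_outage a b c r alpha beta gamma /\ v = a + b + c - alpha - beta - gamma.

Definition dqmf_closed (a b c r : R) : R :=
  if Rlt_dec (Rmin a b) c
  then pos_part (Rmin a b - r) + pos_part (c - r)
  else pos_part (Rmin a b + c - 2 * r).

From Stdlib Require Import Reals Lra.
Open Scope R_scope.

(* The optimisation over (alpha, beta, gamma) collapses to a two-variable
   linear program.  With equal listening and transmitting phases,
   2 r_hd(1/2) = gamma + max(min(alpha, beta), gamma), so an outage point
   only constrains mu = min(alpha, beta) and gamma:
       0 <= mu <= min(a, b),  0 <= gamma <= c,  gamma <= r,  mu + gamma <= 2r,
   and its cost a+b+c-alpha-beta-gamma is at least min(a,b)+c-mu-gamma, with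
   equality when the stronger of the S-R / R-D links is kept at full strength.
   Conversely every point (mu, gamma) of this reduced region lifts to an
   outage point of the same cost.  The theorem then follows from two facts
   about the reduced program: the closed form is a lower bound for its cost
   on the whole region, and it is attained at gamma = min(c, r),
   mu = min(min(a,b), 2r - gamma). *)

Ltac minmax_cases :=
  unfold Rmin, Rmax in *;
  repeat match goal with
  | |- context [Rle_dec ?x ?y] => destruct (Rle_dec x y)
  | H : context [Rle_dec ?x ?y] |- _ => destruct (Rle_dec x y)
  end; try lra.

Definition reduced_feasible (m c r mu gamma : R) : Prop :=
  0 <= mu <= m /\ 0 <= gamma <= c /\ gamma <= r /\ mu + gamma <= 2 * r.

(* At t = 1/2 the two cut values differ only through max(alpha,gamma) versus
   max(beta,gamma), so the cut-set exponent depends on min(alpha, beta). *)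
Lemma r_hd_half (alpha beta gamma : R) :
  r_hd (1/2) alpha beta gamma = (gamma + Rmax (Rmin alpha beta) gamma) / 2.
Proof. unfold r_hd; minmax_cases. Qed.

Lemma outage_reduces (a b c r alpha beta gamma : R) :
  qmf_outage a b c r alpha beta gamma ->
  reduced_feasible (Rmin a b) c r (Rmin alpha beta) gamma /\
  Rmin a b + c - Rmin alpha beta - gamma <= a + b + c - alpha - beta - gamma.
Proof.
  intros [Hcut [Ha [Hb Hc]]].
  rewrite r_hd_half in Hcut.
  assert (Hmax : gamma + Rmax (Rmin alpha beta) gamma <= 2 * r) by lra.
  unfold reduced_feasible; minmax_cases.
Qed.

(* Every point of the reduced region is realised by an outage point of the
   same cost: weaken only the bottleneck link of the relay path. *)
Lemma reduced_lifts (a b c r mu gamma : R) :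
  reduced_feasible (Rmin a b) c r mu gamma ->
  dqmf_set a b c r (Rmin a b + c - mu - gamma).
Proof.
  intros [Hmu [Hg [Hgr Hsum]]].
  destruct (Rle_dec a b) as [Hab | Hab].
  - exists mu, b, gamma; unfold qmf_outage; rewrite r_hd_half.
    split; minmax_cases.
  - exists a, mu, gamma; unfold qmf_outage; rewrite r_hd_half.
    split; minmax_cases.
Qed.

Lemma closed_form_lower (a b c r mu gamma : R) :
  reduced_feasible (Rmin a b) c r mu gamma ->
  dqmf_closed a b c r <= Rmin a b + c - mu - gamma.
Proof.
  intros [Hmu [Hg [Hgr Hsum]]].
  unfold dqmf_closed, pos_part.
  destruct (Rlt_dec (Rmin a b) c); minmax_cases.
Qed.

Lemma closed_form_attained (a b c r : R) :
  0 <= a -> 0 <= b -> 0 <= c -> 0 <= r ->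
  let gamma := Rmin c r in
  let mu := Rmin (Rmin a b) (2 * r - gamma) in
  reduced_feasible (Rmin a b) c r mu gamma /\
  dqmf_closed a b c r = Rmin a b + c - mu - gamma.
Proof.
  intros Ha Hb Hc Hr gamma mu; subst gamma mu.
  unfold reduced_feasible, dqmf_closed, pos_part.
  destruct (Rlt_dec (Rmin a b) c); minmax_cases.
Qed.

Theorem lemma2 (a b c r : R) (ha : 0 <= a) (hb : 0 <= b) (hc : 0 <= c)
  (hr : 0 <= r) :
  is_min (dqmf_set a b c r) (dqmf_closed a b c r).
Proof.
  destruct (closed_form_attained a b c r ha hb hc hr) as [Hfeas Hval].
  split.
  - rewrite Hval; exact (reduced_lifts _ _ _ _ _ _ Hfeas).
  - intros v [alpha [beta [gamma [Hout ->]]]].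
    destruct (outage_reduces _ _ _ _ _ _ _ Hout) as [Hred Hcost].
    pose proof (closed_form_lower _ _ _ _ _ _ Hred).
    lra.
Qed.
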